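(* Let $M$ be a finite group with normal subgroups $K_0\leq K$, and let $E$ be a group acting on $M$ stabilizing $K$ and $K_0$. Let $\mathbb K\subseteq\mathrm{Irr}(K)$ be $ME$-stable. Assume: (i) $K=\operatorname{Z}(K)K_0$; (ii) there exists an $E$-stable subgroup $V\leq M$ such that (ii.1) $M=KV$ and $H:=V\cap K\leq\operatorname{Z}(K)$, and (ii.2) there exists a $VE$-equivariant extension map $\Lambda_0$ with respect to $H\lhd V$ for $\bigcup_{\lambda\in\mathbb K}\mathrm{Irr}(H\mid\lambda)$; (iii) with $\epsilon\colon V\to V/H$ the canonical surjection, there exists an $\epsilon(V)E$-equivariant extension map $\Lambda_\epsilon$ with respect to $K_0\lhd K_0\rtimes\epsilon(V)$ for $\bigcup_{\lambda\in\mathbb K}\mathrm{Irr}(K_0\mid\lambda)$. Then there exists an $ME$-equivariant extension map with respect to $K\lhd M$ for $\mathbb K$.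
   Context: An extension map with respect to $H\lhd G'$ for $\mathbb I\subseteq\mathrm{Irr}(H)$ is a map assigning to each $\varphi\in\mathbb I$ an extension of $\varphi$ to its stabilizer $G'_\varphi$; it is $X$-equivariant if it commutes with the action of $X$ by conjugation/automorphisms. $\mathrm{Irr}(H\mid\lambda)$ denotes the irreducible constituents of the restriction of $\lambda$ to $H$. In (iii), $V/H$ acts on $K_0$ since $H\le\operatorname{Z}(K)$ acts trivially, and $K_0\rtimes\epsilon(V)$ is the corresponding semidirect product. *)

From HB Require Import structures.
From mathcomp Require Import all_boot all_order all_algebra all_fingroup all_solvable all_field all_character.
Set Implicit Arguments.
Unset Strict Implicit.
Unset Printing Implicit Defensive.
Import GRing.Theory Num.Theory.
Local Open Scope group_scope.

Definition ext_map (gT : finGroupType) (G H : {group gT})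
    (I : 'CF(H) -> Prop) (L : forall phi : 'CF(H), 'CF(('I_G[phi])%G)) : Prop :=
  forall phi, I phi -> L phi \is a character /\ ('Res[H] (L phi))%R = phi.

(* X-equivariance for X acting by conjugation: L (phi ^ x) = (L phi) ^ x,
   written pointwise: (L (phi ^ x)) (g ^ x) = (L phi) g. *)
Definition conj_equivariant (gT : finGroupType) (G H : {group gT}) (X : {set gT})
    (I : 'CF(H) -> Prop) (L : forall phi : 'CF(H), 'CF(('I_G[phi])%G)) : Prop :=
  forall phi, I phi -> forall x, x \in X -> forall g : gT,
    L (phi ^ x)%CF (g ^ x) = L phi g.

Definition Irr_under (gT : finGroupType) (H K : {group gT}) (lam : 'CF(K))
    (psi : 'CF(H)) : Prop :=
  exists2 i : Iirr H, psi = ('chi_i)%R & i \in irr_constt ('Res[H] lam)%R.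

Section ExternalSdprod.
Variables (aT rT : finGroupType) (D : {group aT}) (R : {group rT}).
Variable to : groupAction D R.

Lemma sdpair1_isom : isom R (sdpair1 to @* R) (sdpair1 to).
Proof. by apply/isomP; split; [exact: injm_sdpair1 | by []]. Qed.

Definition sdlift (psi : 'CF(R)) : 'CF(sdpair1 to @* R) :=
  cfIsom sdpair1_isom psi.

Definition sdmap (fa : aT -> aT) (fr : rT -> rT) (u : sdprod_by to) :
    sdprod_by to :=
  sdpair2 to (fa u.1) * sdpair1 to (fr u.2).
End ExternalSdprod.

Arguments ext_map {gT} G H I L.
Arguments conj_equivariant {gT} G H X I L.
Arguments Irr_under {gT} H K lam psi.
Arguments sdlift {aT rT D R} to psi.
Arguments sdmap {aT rT D R to} fa fr u.

(* Fix chi in KK and write T = I_M(chi).  As K = Z(K) K0 and M = K V, every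
   element of T is z k v with z in Z(K), k in K0 and v in V :&: T.  Since chi
   is irreducible, Z(K) acts on it by a linear character omega
   (chi (z g) = omega z * chi g), so psi = Res_K0 chi is irreducible and
   mu = omega|_H is a linear constituent of Res_H chi.  On the group X of
   triples (z, k, c) with z in Z(K), k in K0, c in V :&: T (with the product
   twisted by conjugation by c) the three maps (z, k, c) |-> z k c,
   (z, k, c) |-> k eps(c) in K0 ><| V/H and (z, k, c) |-> c are morphisms, so
     theta (z, k, c) = omega z * Lambda_eps(psi) (k eps(c)) * Lambda_0(mu) c
   is a character of X.  Its kernel contains the kernel of X -> T, hence it
   descends to a character of T, which extends chi.  Choosing such an
   extension for every chi gives the extension map; its equivariance under
   M E = K V E follows from that of Lambda_0 and Lambda_eps under V and E,
   K acting trivially. *)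
From HB Require Import structures.
From mathcomp Require Import all_boot all_order all_algebra all_fingroup all_solvable all_field all_character.
From Stdlib Require Import ClassicalEpsilon.
Import GRing.Theory Num.Theory.
Local Open Scope ring_scope.
Local Open Scope group_scope.

Lemma mult_lin_char {gT : finGroupType} {G : {group gT}} {f : gT -> algC} :
  f 1 = 1%R -> {in G &, forall x y, f (x * y) = (f x * f y)%R} ->
  exists2 xi : 'CF(G), xi \is a linear_char & {in G, forall x, xi x = f x}.
Proof.
move=> f1 fM; pose rf x := (f x)%:M : 'M[algC]_(1, 1).
have rfP : mx_repr G rf.
  by split=> [|x y Gx Gy]; rewrite /rf ?f1 // fM // scalar_mxM.
exists (cfRepr (MxRepresentation rfP)).
  by rewrite qualifE /= cfRepr_char cfRepr1 eqxx.
by move=> x Gx; rewrite cfunE Gx /= /rf mxtrace_scalar mulr1n.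
Qed.

(* A character of G whose kernel contains 'ker f descends to a character of
   the image f @* G, through the isomorphism G / 'ker f ~ f @* G. *)
Lemma descend_char {aT rT : finGroupType} {G : {group aT}}
    {f : {morphism G >-> rT}} {theta : 'CF(G)} :
  theta \is a character -> 'ker f \subset cfker theta ->
  exists2 eta : 'CF(f @* G), eta \is a character &
    {in G, forall x, eta (f x) = theta x}.
Proof.
move=> Ntheta sKf; have nKfG := ker_norm f.
have sKcoset : 'ker (coset ('ker f)) \subset 'ker f by rewrite ker_coset.
pose g := factm_morphism sKcoset nKfG.
have isoG : isom (G / 'ker f) (f @* G) g.
  by apply/isomP; rewrite ker_factm -quotientE trivg_quotient morphim_factm.
exists (cfIsom isoG (theta / 'ker f)%CF).
  by rewrite cfIsom_char cfQuo_char.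
move=> x Gx; have Nx : x \in 'N('ker f) by rewrite (subsetP nKfG).
by rewrite -[f x](factmE sKcoset nKfG) // cfIsomE ?mem_quotient // cfQuoE ?ker_normal.
Qed.

Lemma irr_repr_center_scalar (gT : finGroupType) (G : {group gT}) n
    (rG : mx_representation algC G n) z :
  cfRepr rG \in irr G -> z \in 'Z(G) -> is_scalar_mx (rG z).
Proof.
case/irrP=> i Di Zz; have : z \in 'Z(cfRepr rG)%CF.
  by rewrite Di; rewrite -cap_cfcenter_irr in Zz; move/bigcapP: Zz; apply.
by rewrite cfcenter_repr inE => /andP[].
Qed.

Lemma irr_center_mul {gT : finGroupType} {G : {group gT}} {chi : 'CF(G)} {z g} :
  chi \in irr G -> z \in 'Z(G) -> g \in G ->
  (chi (z * g)%g * chi 1%g = chi z * chi g)%R.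
Proof.
move=> Ichi Zz Gg; have Gz : z \in G by case/setIP: Zz.
have [rG _ Dchi] := irr_reprP Ichi.
have /is_scalar_mxP[c rz] : is_scalar_mx (rG z).
  by apply: irr_repr_center_scalar Zz; rewrite -Dchi.
rewrite Dchi !cfunE groupM // Gz Gg group1 /= !mulr1n repr_mxM // rz repr_mx1.
by rewrite mul_scalar_mx mxtraceZ !mxtrace_scalar mulrAC mulr_natr.
Qed.

(* If G = Z(G) K0 then irreducible characters of G stay irreducible on K0:
   a K0-submodule is also stable under the central (scalar) part. *)
Lemma Res_irr_center {gT : finGroupType} {G K0 : {group gT}} {chi : 'CF(G)} :
  chi \in irr G -> K0 \subset G -> G \subset 'Z(G) * K0 ->
  'Res[K0] chi \in irr K0.
Proof.
move=> Ichi sK0G sGZK0; have [rG irrG Dchi] := irr_reprP Ichi.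
apply/irr_reprP; exists (Representation (subg_repr rG sK0G)); last first.
  by rewrite Dchi cfRepr_sub.
case/mx_irrP: irrG => npos irrG; apply/mx_irrP; split=> // U modU nzU.
apply: irrG nzU; apply/mxmoduleP=> x Gx.
have /mulsgP[z k Zz K0k ->] := subsetP sGZK0 x Gx.
have Gz : z \in G by case/setIP: Zz.
have /is_scalar_mxP[c rz] : is_scalar_mx (rG z).
  by apply: irr_repr_center_scalar Zz; rewrite -Dchi.
rewrite (repr_mxM rG Gz (subsetP sK0G k K0k)) rz mul_scalar_mx -scalemxAr.
by apply: scalemx_sub; move/mxmoduleP: modU => /(_ k K0k).
Qed.

Lemma sdpair21_components {aT rT : finGroupType} {D : {group aT}} {R : {group rT}}
    (to : groupAction D R) {a y} : a \in D -> y \in R ->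
  (sdpair2 to a * sdpair1 to y).1 = a /\ (sdpair2 to a * sdpair1 to y).2 = y.
Proof.
by move=> Da Ry; rewrite /= !val_insubd !inE Da Ry !group1 /= gact1 ?mulg1 ?mul1g.
Qed.

(* Two group identities behind the twisted product on triples (z, k, c),
   encoded as ((z c, k c), c): multiplying encodings componentwise
   multiplies the z and k parts after conjugating the second by c^-1 ... *)
Lemma mulg_twist (gT : finGroupType) (a a' c c' : gT) :
  (a * a') * (c * c')^-1 = (a * c^-1) * (a' * c'^-1) ^ c^-1.
Proof. by rewrite conjgE invgK invMg !mulgA mulgKV. Qed.

(* ... and the product map (z, k, c) |-> z k c is then multiplicative,
   provided the conjugated z' commutes with k. *)
Lemma mulg_twist_prod (gT : finGroupType) (z k c z' k' c' : gT) :
  commute (z' ^ c^-1) k ->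
  z * z' ^ c^-1 * (k * k' ^ c^-1) * (c * c') = z * k * c * (z' * k' * c').
Proof.
move=> czk; rewrite (mulgA (z * _) k) -(mulgA z _ k) czk.
by rewrite !conjgE !invgK !mulgA !mulgKV.
Qed.

Section Construction.
Variables (gT : finGroupType) (M K K0 E V H : {group gT}) (KK : pred 'CF(K)).
Hypotheses (normK : K <| M) (normK0 : K0 <| M) (sK0K : K0 \subset K)
  (nME : E \subset 'N(M)) (nKE : E \subset 'N(K)) (nK0E : E \subset 'N(K0))
  (KK_irr : forall chi, chi \in KK -> chi \in irr K)
  (KK_stable : forall chi x, chi \in KK -> x \in M <*> E -> (chi ^ x)%CF \in KK)
  (defK : K :=: 'Z(K) * K0)
  (nVE : E \subset 'N(V))
  (defM : M :=: K * V) (defH : H :=: V :&: K) (sHZ : H \subset 'Z(K)).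
Variable (nVK0 : {acts (V / H), on group K0 | ('J %% H)%gact}).
Local Notation to := <[nVK0]>%gact.
Local Notation sdT := (sdprod_by to).

Definition I0 (psi : 'CF(H)) : Prop :=
  exists2 lam, lam \in KK & Irr_under H K lam psi.
Definition Ieps (psi : 'CF(K0)) : Prop :=
  exists2 lam, lam \in KK & Irr_under K0 K lam psi.
Definition Ieps' (phi : 'CF(sdpair1 to @* K0)) : Prop :=
  exists2 psi, Ieps psi & phi = sdlift to psi.

Variable L0 : forall psi : 'CF(H), 'CF(('I_V[psi])%G).
Hypotheses (L0ext : ext_map V H I0 L0)
  (L0eq : conj_equivariant V H (V <*> E) I0 L0).
Variable Leps : forall phi : 'CF(sdpair1 to @* K0), 'CF(('I_[set: sdT][phi])%G).
Hypotheses (Lext : ext_map [set: sdT]%G _ Ieps' Leps)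
  (Leq : conj_equivariant _ _ (sdpair2 to @* (V / H)) Ieps' Leps)
  (LeqE : forall psi, Ieps psi -> forall e, e \in E -> forall s,
           Leps (sdlift to (psi ^ e)%CF)
                (sdmap (fun a => a ^ coset H e) (fun x => x ^ e) s)
           = Leps (sdlift to psi) s).

Let sKM : K \subset M. Proof. exact: normal_sub. Qed.
Let sVM : V \subset M. Proof. by rewrite defM mulG_subr. Qed.
Let nKM : M \subset 'N(K). Proof. exact: normal_norm. Qed.
Let nK0M : M \subset 'N(K0). Proof. exact: normal_norm. Qed.
Let sHV : H \subset V. Proof. by rewrite defH subsetIl. Qed.
Let sHK : H \subset K. Proof. by rewrite defH subsetIr. Qed.
Let sZK : 'Z(K) \subset K. Proof. exact: center_sub. Qed.
Let nKV : V \subset 'N(K). Proof. exact: subset_trans sVM nKM. Qed.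
Let nK0V : V \subset 'N(K0). Proof. exact: subset_trans sVM nK0M. Qed.
Let nHV : V \subset 'N(H). Proof. by rewrite defH normsI ?normG. Qed.
Let nHE : E \subset 'N(H). Proof. by rewrite defH normsI. Qed.
Let nZM : M \subset 'N('Z(K)). Proof. exact: char_norm_trans (center_char K) nKM. Qed.
Let nZE : E \subset 'N('Z(K)). Proof. exact: char_norm_trans (center_char K) nKE. Qed.
Let nZV : V \subset 'N('Z(K)). Proof. exact: subset_trans sVM nZM. Qed.

Lemma centerJV z c : z \in 'Z(K) -> c \in V -> z ^ c^-1 \in 'Z(K).
Proof. by move=> Zz Vc; rewrite memJ_norm // groupV (subsetP nZV). Qed.

Lemma K0JV k c : k \in K0 -> c \in V -> k ^ c^-1 \in K0.
Proof. by move=> K0k Vc; rewrite memJ_norm // groupV (subsetP nK0V). Qed.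

Lemma commZK0 z k : z \in 'Z(K) -> k \in K0 -> commute z k.
Proof. by move=> /setIP[_ cKz] K0k; apply: (centP cKz); apply: (subsetP sK0K). Qed.

Lemma cK0H : K0 \subset 'C(H).
Proof.
by rewrite centsC (subset_trans sHZ) // (subset_trans (subsetIr K _)) ?centS.
Qed.

(* The central character of chi on Z(K), and the linear character mu of H
   it induces; mu is the constituent of Res_H chi that Lambda_0 extends. *)
Definition omega (chi : 'CF(K)) (z : gT) : algC := (chi z / chi 1%g)%R.
Definition mu (chi : 'CF(K)) : 'CF(H) := ((chi 1%g)^-1 *: 'Res[H] chi)%R.

Lemma omegaJ chi x z : x \in 'N(K) -> omega (chi ^ x)%CF (z ^ x) = omega chi z.
Proof. by move=> nKx; rewrite /omega cfConjgEJ // cfConjg1. Qed.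

Lemma muJ chi x : x \in 'N(K) -> x \in 'N(H) -> mu (chi ^ x)%CF = ((mu chi) ^ x)%CF.
Proof. by move=> nKx nHx; rewrite /mu linearZ /= cfConjg1 cfConjgRes_norm. Qed.

Section CentralCharacter.
Variable chi : 'CF(K).
Hypothesis KKchi : chi \in KK.
Let Ichi : chi \in irr K. Proof. exact: KK_irr. Qed.

Lemma chi1_neq0 : chi 1%g != 0%R.
Proof. by case/irrP: Ichi => i ->; apply: irr1_neq0. Qed.

Lemma omega_mulg z g : z \in 'Z(K) -> g \in K ->
  chi (z * g)%g = (omega chi z * chi g)%R.
Proof.
move=> Zz Kg; have := irr_center_mul Ichi Zz Kg.
by rewrite /omega mulrAC => <-; rewrite mulfK ?chi1_neq0.
Qed.

Lemma omega1 : omega chi 1%g = 1%R.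
Proof. by rewrite /omega divff ?chi1_neq0. Qed.

Lemma omegaM z z' : z \in 'Z(K) -> z' \in 'Z(K) ->
  omega chi (z * z')%g = (omega chi z * omega chi z')%R.
Proof. by move=> Zz Zz'; rewrite /omega omega_mulg ?(subsetP sZK) // mulrA. Qed.

Lemma Ieps_Res : Ieps ('Res[K0] chi).
Proof.
have Ipsi : 'Res[K0] chi \in irr K0.
  by apply: Res_irr_center Ichi sK0K _; rewrite -defK.
exists chi => //; have /irrP[i Di] := Ipsi; exists i => //.
by rewrite irr_consttE -Di (irrWnorm Ipsi) oner_eq0.
Qed.

Lemma muE h : h \in H -> mu chi h = omega chi h.
Proof. by move=> Hh; rewrite /mu cfunE cfResE // mulrC. Qed.

Lemma mu_lin : mu chi \is a linear_char.
Proof.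
have [xi Lxi xiE] : exists2 xi : 'CF(H), xi \is a linear_char &
    {in H, forall x, xi x = omega chi x}.
  apply: mult_lin_char; first exact: omega1.
  by move=> x y Hx Hy; apply: omegaM; apply: (subsetP sHZ).
suff -> : mu chi = xi by [].
by apply/cfun_inP=> h Hh; rewrite muE // xiE.
Qed.

Lemma I0_mu : I0 (mu chi).
Proof.
have Imu := lin_char_irr mu_lin.
exists chi => //; have /irrP[i Di] := Imu; exists i => //.
have -> : 'Res[H] chi = (chi 1%g *: mu chi)%R.
  by rewrite /mu scalerA divff ?scale1r ?chi1_neq0.
by rewrite irr_consttE cfdotZl -Di (irrWnorm Imu) mulr1 chi1_neq0.
Qed.
End CentralCharacter.

(* In K0 ><| V/H, the action of eps(c) on K0 is conjugation by c (H
   centralizes K0, so this is well defined). *)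
Lemma toE k c : k \in K0 -> c \in V -> to k (coset H c) = k ^ c.
Proof.
move=> K0k Vc; rewrite actbyE ?mem_quotient //= modactE ?in_setT ?(subsetP nHV) //.
by rewrite setTI afixJ; apply: (subsetP cK0H).
Qed.

Lemma sdliftE (p : 'CF(K0)) k : k \in K0 -> sdlift to p (sdpair1 to k) = p k.
Proof. by move=> K0k; rewrite /sdlift cfIsomE. Qed.

Lemma sdpair2_norm c : c \in V -> sdpair2 to (coset H c) \in 'N(sdpair1 to @* K0).
Proof.
by move=> Vc; apply: (subsetP (im_sdpair_norm to)); rewrite mem_morphim ?mem_quotient.
Qed.

Lemma sdlift_conj (p : 'CF(K0)) c : c \in V ->
  ((sdlift to p) ^ (sdpair2 to (coset H c)))%CF = sdlift to (p ^ c)%CF.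
Proof.
move=> Vc; apply/cfun_inP=> _ /morphimP[k _ K0k ->].
rewrite cfConjgE ?sdpair2_norm // sdliftE // cfConjgE ?(subsetP nK0V) //.
rewrite -morphV ?mem_quotient // -sdpair_act ?groupV ?mem_quotient //.
by rewrite -morphV ?(subsetP nHV) // toE ?groupV // sdliftE ?K0JV.
Qed.

Lemma sdpair12_comm a k : a \in V / H -> k \in K0 ->
  sdpair1 to k * sdpair2 to a = sdpair2 to a * sdpair1 to (to k a).
Proof. by move=> Da K0k; rewrite sdpair_act // conjgC. Qed.

Lemma sdpair21_comm c k : c \in V -> k \in K0 ->
  sdpair2 to (coset H c) * sdpair1 to k =
  sdpair1 to (k ^ c^-1) * sdpair2 to (coset H c).
Proof.
by move=> Vc K0k; rewrite sdpair12_comm ?mem_quotient ?K0JV // toE ?K0JV // conjgKV.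
Qed.

Definition glued_extension (chi : 'CF(K)) (theta : 'CF(('I_M[chi])%G)) : Prop :=
  theta \is a character /\
  forall z k v, z \in 'Z(K) -> k \in K0 -> v \in V :&: 'I_M[chi] ->
    theta (z * k * v) = (omega chi z
                         * Leps (sdlift to ('Res[K0] chi)) (sdpair1 to k * sdpair2 to (coset H v))%g
                         * L0 (mu chi) v)%R.

Section GluedExtension.
Variable chi : 'CF(K).
Hypothesis KKchi : chi \in KK.

Local Notation VI := (V :&: 'I_M[chi]).
Local Notation psi' := (sdlift to ('Res[K0] chi)).

Let sKI : K \subset 'I_M[chi]. Proof. exact: sub_Inertia sKM. Qed.

Lemma inertia_decomp g : g \in 'I_M[chi] ->
  exists z k v, [/\ z \in 'Z(K), k \in K0, v \in VI & g = z * k * v].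
Proof.
move=> Ig; have /setIP[Mg _] := Ig; rewrite defM in Mg.
case/mulsgP: Mg => y v Ky Vv def_g; have Ky' := Ky; rewrite defK in Ky'.
case/mulsgP: Ky' => z k Zz K0k def_y; exists z, k, v.
split=> //; last by rewrite def_g def_y.
rewrite in_setI Vv; have -> : v = y^-1 * g by rewrite def_g mulKg.
by rewrite groupM ?groupV // (subsetP sKI).
Qed.

(* Triples (z, k, c), encoded as ((z c, k c), c), form a group X for the
   componentwise product of (gT * gT) * gT. *)
Definition triple (z k c : gT) : (gT * gT) * gT := ((z * c, k * c), c).

Definition triple_set : {set (gT * gT) * gT} :=
  [set u | [&& u.2 \in VI, u.1.1 * u.2^-1 \in 'Z(K) & u.1.2 * u.2^-1 \in K0]].

Lemma triple_in {z k c} : z \in 'Z(K) -> k \in K0 -> c \in VI ->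
  triple z k c \in triple_set.
Proof. by move=> Zz K0k VIc; rewrite inE /= !mulgK VIc Zz K0k. Qed.

Lemma triple_setP {u} : u \in triple_set ->
  [/\ u.2 \in VI, u.1.1 * u.2^-1 \in 'Z(K) & u.1.2 * u.2^-1 \in K0].
Proof. by rewrite inE => /and3P[]. Qed.

Lemma triple_group_set : group_set triple_set.
Proof.
apply/group_setP; split; first by rewrite inE /= !(invg1, mulg1) !group1.
move=> u v /triple_setP[VIu Zu K0u] /triple_setP[VIv Zv K0v].
have /setIP[Vu _] := VIu.
by rewrite inE /= groupM //= !mulg_twist (groupM Zu) ?centerJV // (groupM K0u) ?K0JV.
Qed.
Canonical X := Group triple_group_set.

Definition triple_prod (u : (gT * gT) * gT) : gT :=
  (u.1.1 * u.2^-1) * (u.1.2 * u.2^-1) * u.2.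

Lemma triple_prodE z k c : triple_prod (triple z k c) = z * k * c.
Proof. by rewrite /triple_prod /= !mulgK. Qed.

Lemma triple_prodM : {in X &, {morph triple_prod : u v / u * v}}.
Proof.
move=> u v /triple_setP[/setIP[Vu _] Zu K0u] /triple_setP[_ Zv K0v].
rewrite /triple_prod /= !mulg_twist.
by apply: mulg_twist_prod; apply: commZK0; rewrite ?centerJV.
Qed.
Canonical triple_prod_morphism := Morphism triple_prodM.

Definition triple_sd (u : (gT * gT) * gT) : sdT :=
  sdpair1 to (u.1.2 * u.2^-1) * sdpair2 to (coset H u.2).

Lemma triple_sdM : {in X &, {morph triple_sd : u v / u * v}}.
Proof.
move=> u v /triple_setP[/setIP[Vu _] _ K0u] /triple_setP[/setIP[Vv _] _ K0v].
rewrite /triple_sd /= mulg_twist sdpair1_morphM ?K0JV //.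
rewrite (morphM (coset_morphism H)) ?(subsetP nHV) //=.
rewrite [sdpair2 to (coset H _ * _)]sdpair2_morphM ?mem_quotient //.
by rewrite -!mulgA; congr (_ * _); rewrite [RHS]mulgA sdpair21_comm // mulgA.
Qed.
Canonical triple_sd_morphism := Morphism triple_sdM.

Definition triple_V (u : (gT * gT) * gT) : gT := u.2.

Lemma triple_VM : {in X &, {morph triple_V : u v / u * v}}. Proof. by []. Qed.
Canonical triple_V_morphism := Morphism triple_VM.

(* The central character of chi, read on the Z(K)-component, is
   multiplicative on X because V :&: I_M(chi) fixes chi. *)
Definition triple_omega (u : (gT * gT) * gT) : algC := omega chi (u.1.1 * u.2^-1).

Lemma triple_omegaM : {in X &, forall u v,
  triple_omega (u * v) = (triple_omega u * triple_omega v)%R}.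
Proof.
move=> u v /triple_setP[/setIP[Vu /setIP[_ Iu]] Zu _] /triple_setP[_ Zv _].
rewrite /triple_omega /= mulg_twist omegaM ?centerJV //.
by rewrite /omega (inertia_valJ _ (groupVr Iu)).
Qed.

Lemma triple_omega1 : triple_omega 1 = 1%R.
Proof. by rewrite /triple_omega /= invg1 mulg1 omega1. Qed.

Lemma VI_conj_chi c : c \in VI -> (chi ^ c)%CF = chi.
Proof. by case/setIP=> _ /setIP[_ Ic]; rewrite inertiaJ. Qed.

Lemma VI_conj_Res c : c \in VI -> (('Res[K0] chi) ^ c)%CF = 'Res[K0] chi.
Proof.
move=> VIc; have /setIP[Vc _] := VIc.
by rewrite cfConjgRes_norm ?(subsetP nK0V) ?(subsetP nKV) ?VI_conj_chi.
Qed.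

Lemma VI_conj_mu c : c \in VI -> ((mu chi) ^ c)%CF = mu chi.
Proof.
move=> VIc; have /setIP[Vc _] := VIc.
by rewrite -muJ ?(subsetP nKV) ?(subsetP nHV) ?VI_conj_chi.
Qed.

Lemma triple_sd_inertia : triple_sd_morphism @* X \subset 'I_[set: sdT][psi'].
Proof.
apply/subsetP=> _ /morphimP[u _ Xu ->]; have [VIu _ K0u] := triple_setP Xu.
have /setIP[Vu _] := VIu.
rewrite /= /triple_sd inE in_setT /=; apply: groupM.
  by apply: (subsetP (sub_inertia _)); rewrite mem_morphim.
by rewrite inE sdpair2_norm //= sdlift_conj // VI_conj_Res.
Qed.

Lemma triple_V_inertia : triple_V_morphism @* X \subset 'I_V[mu chi].
Proof.
apply/subsetP=> _ /morphimP[u _ Xu ->]; have [VIu _ _] := triple_setP Xu.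
have /setIP[Vu _] := VIu.
by rewrite /= /triple_V inE Vu inE (subsetP nHV) //= VI_conj_mu.
Qed.

Let Ieps_psi' : Ieps' psi'.
Proof. by exists ('Res[K0] chi); first exact: Ieps_Res. Qed.

Let I0_mu_chi : I0 (mu chi). Proof. exact: I0_mu. Qed.

Lemma Leps_char : Leps psi' \is a character.
Proof. by case: (Lext _ Ieps_psi'). Qed.

Lemma L0_char : L0 (mu chi) \is a character.
Proof. by case: (L0ext _ I0_mu_chi). Qed.

Lemma Leps_K0 k : k \in K0 -> Leps psi' (sdpair1 to k) = chi k.
Proof.
move=> K0k; case: (Lext _ Ieps_psi') => _ eR.
have Sk : sdpair1 to k \in sdpair1 to @* K0 by rewrite mem_morphim.
rewrite -(cfResE _ _ Sk); last exact: sub_Inertia (subsetT _).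
by rewrite eR sdliftE // cfResE.
Qed.

Lemma L0_H h : h \in H -> L0 (mu chi) h = omega chi h.
Proof.
move=> Hh; case: (L0ext _ I0_mu_chi) => _ eR.
rewrite -(cfResE _ _ Hh); last exact: sub_Inertia sHV.
by rewrite eR muE.
Qed.

Definition theta_val (u : (gT * gT) * gT) : algC :=
  (triple_omega u * Leps psi' (triple_sd u) * L0 (mu chi) (triple_V u))%R.

Lemma theta_exists : exists2 theta : 'CF(X), theta \is a character &
  {in X, forall u, theta u = theta_val u}.
Proof.
have [xi Lxi xiE] := mult_lin_char triple_omega1 triple_omegaM.
pose Leps_X := cfMorph ('Res[triple_sd_morphism @* X] (Leps psi')).
pose L0_X := cfMorph ('Res[triple_V_morphism @* X] (L0 (mu chi))).
exists (xi * Leps_X * L0_X)%R.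
  apply: rpredM; first apply: rpredM.
  - exact: lin_charW.
  - exact/cfMorph_char/cfRes_char/Leps_char.
  - exact/cfMorph_char/cfRes_char/L0_char.
move=> u Xu; rewrite !cfunE xiE // !cfMorphE // !cfResE ?mem_morphim //.
  exact: triple_V_inertia.
exact: triple_sd_inertia.
Qed.

(* On the kernel of the product map, theta_val takes the value chi 1 = theta_val 1:
   if z k c = 1 then c lies in V :&: K = H, so that everything is central and
   the three factors multiply to omega (z k c) chi 1. *)
Lemma theta_val_ker u : u \in X -> triple_prod u = 1 -> theta_val u = chi 1%g.
Proof.
move=> Xu; have [/setIP[Vc _] Zz K0k] := triple_setP Xu.
rewrite /theta_val /triple_omega /triple_sd /triple_V /triple_prod.
set z := u.1.1 * u.2^-1; set k := u.1.2 * u.2^-1; set c := u.2 => zkc1.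
have def_c : c = (z * k)^-1 by apply/eqP; rewrite eq_sym eq_invg_mul zkc1.
have Hc : c \in H.
  have Kz := subsetP sZK _ Zz; have Kk := subsetP sK0K _ K0k.
  by rewrite defH inE Vc def_c groupV groupM.
have Zc : c \in 'Z(K) := subsetP sHZ c Hc.
have Zk : k \in 'Z(K) by rewrite -(mulKg z k) -(invgK (z * k)) -def_c !groupM ?groupV.
rewrite coset_id // morph1 mulg1 Leps_K0 // L0_H // -[k]mulg1 omega_mulg //.
have Zzk : z * k \in 'Z(K) by rewrite groupM.
rewrite mulrA -omegaM // mulrAC -omegaM //.
by rewrite zkc1 omega1 // mul1r.
Qed.

Lemma ker_triple_prod {theta : 'CF(X)} : theta \is a character ->
  {in X, forall u, theta u = theta_val u} ->
  'ker triple_prod_morphism \subset cfker theta.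
Proof.
move=> Ntheta thetaE; apply/subsetP=> u; rewrite kerE => /morphpreP[Xu /set1P zkc1].
rewrite cfkerEchar // inE Xu !thetaE // theta_val_ker //.
by rewrite theta_val_ker ?group1 ?eqxx // /triple_prod /= !(invg1, mulg1).
Qed.

Lemma inertia_sub_triple_prod : 'I_M[chi] \subset triple_prod_morphism @* X.
Proof.
apply/subsetP=> _ /inertia_decomp[z [k [v [Zz K0k VIv ->]]]].
rewrite -triple_prodE; apply: mem_morphim; exact: triple_in.
Qed.

Lemma glued_extension_exists : exists theta, glued_extension chi theta.
Proof.
have [theta Ntheta thetaE] := theta_exists.
have [eta Neta etaE] := descend_char Ntheta (ker_triple_prod Ntheta thetaE).
exists ('Res['I_M[chi]] eta); split=> [|z k v Zz K0k VIv]; first exact: cfRes_char.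
have Xu := triple_in Zz K0k VIv.
have Iu : z * k * v \in 'I_M[chi].
  have /setIP[_ Iv] := VIv; have Iz := subsetP sKI _ (subsetP sZK _ Zz).
  by rewrite !groupM // (subsetP sKI) ?(subsetP sK0K).
rewrite cfResE ?inertia_sub_triple_prod // -triple_prodE etaE // thetaE //.
by rewrite /theta_val /triple_omega /triple_sd /triple_V /= !mulgK.
Qed.
End GluedExtension.

(* The extension map: a glued extension of each chi in KK, chosen once and
   for all; being given by the explicit formula, it is determined on the
   whole inertia group. *)
Definition Lambda (chi : 'CF(K)) : 'CF(('I_M[chi])%G) :=
  epsilon (inhabits 0%R) (glued_extension chi).

Lemma LambdaP {chi} : chi \in KK -> glued_extension chi (Lambda chi).
Proof. by move=> KKchi; apply: epsilon_spec; apply: glued_extension_exists. Qed.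

(* Lambda chi extends chi: on z k with z in Z(K), k in K0 the formula gives
   omega z * chi k = chi (z k). *)
Lemma Lambda_ext : ext_map M K (fun chi => chi \in KK) Lambda.
Proof.
move=> chi KKchi; have [NL LE] := LambdaP KKchi; split=> //.
have sKI : K \subset 'I_M[chi] := sub_Inertia chi sKM.
apply/cfun_inP=> g Kg; rewrite cfResE //; have ZK0g := Kg; rewrite defK in ZK0g.
case/mulsgP: ZK0g => z k Zz K0k ->; rewrite -[z * k]mulg1 LE ?group1 //.
rewrite !morph1 !mulg1 Leps_K0 // L0_H // omega1 // mulr1.
by rewrite omega_mulg ?(subsetP sK0K).
Qed.

Definition Leps_conj_invariant (x : gT) : Prop :=
  forall chi, chi \in KK -> forall k v, k \in K0 -> v \in V ->
  Leps (sdlift to (('Res[K0] chi) ^ x)%CF)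
       (sdpair1 to (k ^ x) * sdpair2 to (coset H (v ^ x)))
  = Leps (sdlift to ('Res[K0] chi)) (sdpair1 to k * sdpair2 to (coset H v)).

(* Lambda is x-equivariant as soon as x normalizes all subgroups involved,
   Lambda_0 is x-equivariant (x in V E) and Lambda_eps is x-invariant: both
   sides are then given by the same glued formula. *)
Lemma Lambda_conj x : x \in M <*> E -> x \in V <*> E ->
  x \in 'N(M) -> x \in 'N(K) -> x \in 'N(K0) -> x \in 'N(H) -> x \in 'N(V) ->
  x \in 'N('Z(K)) -> Leps_conj_invariant x ->
  forall chi, chi \in KK -> forall g, Lambda (chi ^ x)%CF (g ^ x) = Lambda chi g.
Proof.
move=> MEx VEx nMx nKx nK0x nHx nVx nZx Lx chi KKchi g.
have KKchix := KK_stable _ _ KKchi MEx.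
have Ix : 'I_M[(chi ^ x)%CF] = 'I_M[chi] :^ x.
  by rewrite conjIg (normP nMx) conjg_inertia.
have [Ig | nIg] := boolP (g \in 'I_M[chi]); last first.
  have nIgx : g ^ x \notin 'I_M[(chi ^ x)%CF] by rewrite Ix memJ_conjg.
  by rewrite (cfun0 _ nIg) (cfun0 _ nIgx).
have [z [k [v [Zz K0k VIv ->]]]] := inertia_decomp _ _ Ig.
have /setIP[Vv Iv] := VIv.
have [_ LEx] := LambdaP KKchix; have [_ LE] := LambdaP KKchi.
have Zzx : z ^ x \in 'Z(K) by rewrite memJ_norm.
have K0kx : k ^ x \in K0 by rewrite memJ_norm.
have VIvx : v ^ x \in V :&: 'I_M[(chi ^ x)%CF].
  by rewrite in_setI (memJ_norm _ nVx) Vv Ix memJ_conjg.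
rewrite !conjMg (LEx _ _ _ Zzx K0kx VIvx).
rewrite (LE _ _ _ Zz K0k VIv) omegaJ // -cfConjgRes_norm // Lx // muJ //.
by rewrite (L0eq _ (I0_mu _ KKchi) _ VEx).
Qed.

(* Lambda_eps is invariant under conjugation by V: this is its
   eps(V)-equivariance, since conjugation by v in V acts on K0 ><| V/H as
   conjugation by eps(v). *)
Lemma Leps_conj_invariant_V x : x \in V -> Leps_conj_invariant x.
Proof.
move=> Vx chi KKchi k v K0k Vv.
have Nx := subsetP nHV _ Vx; have Nv := subsetP nHV _ Vv.
have -> : sdpair1 to (k ^ x) * sdpair2 to (coset H (v ^ x))
   = (sdpair1 to k * sdpair2 to (coset H v)) ^ sdpair2 to (coset H x).
  rewrite conjMg -sdpair_act ?mem_quotient // toE //.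
  by rewrite -morphJ ?mem_quotient // -morphJ.
rewrite -sdlift_conj // Leq ?mem_morphim ?mem_quotient //.
by exists ('Res[K0] chi); first exact: Ieps_Res.
Qed.

(* Lambda_eps is invariant under conjugation by E: this is its
   E-equivariance, E acting on K0 ><| V/H componentwise. *)
Lemma Leps_conj_invariant_E e : e \in E -> Leps_conj_invariant e.
Proof.
move=> Ee chi KKchi k v K0k Vv.
have Ne := subsetP nHE _ Ee; have Nv := subsetP nHV _ Vv.
have Vve : v ^ e \in V by rewrite memJ_norm // (subsetP nVE).
have K0ke : k ^ e \in K0 by rewrite memJ_norm // (subsetP nK0E).
rewrite -(LeqE _ (Ieps_Res _ KKchi) _ Ee (sdpair1 to k * sdpair2 to (coset H v))).
congr (Leps _ _); rewrite sdpair12_comm ?mem_quotient // /sdmap.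
rewrite sdpair12_comm ?mem_quotient // !toE //.
have K0kv : k ^ v \in K0 by rewrite -[v]invgK K0JV ?groupV.
have [-> ->] := sdpair21_components to (mem_quotient H Vv) K0kv.
by rewrite -(morphJ (coset_morphism H) Nv Ne) [(k ^ v) ^ e]conjJg.
Qed.

Lemma Lambda_conjE e : e \in E -> forall chi, chi \in KK -> forall g,
  Lambda (chi ^ e)%CF (g ^ e) = Lambda chi g.
Proof.
move=> Ee; apply: Lambda_conj; last exact: Leps_conj_invariant_E.
- exact: (subsetP (joing_subr M E)).
- exact: (subsetP (joing_subr V E)).
- exact: (subsetP nME).
- exact: (subsetP nKE).
- exact: (subsetP nK0E).
- exact: (subsetP nHE).
- exact: (subsetP nVE).
- exact: (subsetP nZE).
Qed.

Lemma Lambda_conjV v : v \in V -> forall chi, chi \in KK -> forall g,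
  Lambda (chi ^ v)%CF (g ^ v) = Lambda chi g.
Proof.
move=> Vv; apply: Lambda_conj; last exact: Leps_conj_invariant_V.
- by rewrite (subsetP (joing_subl M E)) ?(subsetP sVM).
- exact: (subsetP (joing_subl V E)).
- by rewrite (subsetP (normG M)) ?(subsetP sVM).
- exact: (subsetP nKV).
- exact: (subsetP nK0V).
- exact: (subsetP nHV).
- exact: (subsetP (normG V)).
- exact: (subsetP nZV).
Qed.

(* K fixes each chi, and Lambda chi is a class function of I_M(chi) >= K. *)
Lemma Lambda_conjK k : k \in K -> forall chi, chi \in KK -> forall g,
  Lambda (chi ^ k)%CF (g ^ k) = Lambda chi g.
Proof.
move=> Kk chi KKchi g; rewrite cfConjg_id // cfunJ //.
exact: subsetP (sub_Inertia chi sKM) k Kk.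
Qed.

Lemma Lambda_equiv : conj_equivariant M K (M <*> E) (fun chi => chi \in KK) Lambda.
Proof.
move=> chi KKchi x; rewrite norm_joinEr // => /mulsgP[m e Mm Ee ->] g.
have Mm' := Mm; rewrite defM in Mm'; case/mulsgP: Mm' => k v Kk Vv def_m.
have MEm : m \in M <*> E by rewrite (subsetP (joing_subl M E)).
have MEk : k \in M <*> E by rewrite (subsetP (joing_subl M E)) ?(subsetP sKM).
have nKk : k \in 'N(K) by rewrite (subsetP nKM) ?(subsetP sKM).
have nKv : v \in 'N(K) by rewrite (subsetP nKV).
have nKe : e \in 'N(K) by rewrite (subsetP nKE).
rewrite cfConjgMnorm ?def_m ?groupM // conjgM Lambda_conjE //; last first.
  by apply: KK_stable; rewrite -?def_m.
rewrite cfConjgMnorm // conjgM Lambda_conjV //; last exact: KK_stable.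
exact: Lambda_conjK.
Qed.

End Construction.

Theorem proposition4p1 (gT : finGroupType) (M K K0 E V H : {group gT})
  (KK : pred 'CF(K))
  (nKM : K <| M) (nK0M : K0 <| M) (sK0K : K0 \subset K)
  (nME : E \subset 'N(M)) (nKE : E \subset 'N(K)) (nK0E : E \subset 'N(K0))
  (KK_irr : forall chi, chi \in KK -> chi \in irr K)
  (KK_stable : forall chi x, chi \in KK -> x \in M <*> E -> (chi ^ x)%CF \in KK)
  (* (i) *)
  (hi : K :=: 'Z(K) * K0)
  (* (ii) *)
  (nVE : E \subset 'N(V))
  (defM : M :=: K * V) (defH : H :=: V :&: K) (sHZ : H \subset 'Z(K))
  (hii2 : exists L0 : forall psi : 'CF(H), 'CF(('I_V[psi])%G),
     let I0 := fun psi : 'CF(H) => exists2 lam, lam \in KK & Irr_under H K lam psi in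
     ext_map V H I0 L0 /\ conj_equivariant V H (V <*> E) I0 L0)
  (* (iii) : K0 ><| epsilon(V), with V/H acting on K0 by conjugation *)
  (nVK0 : {acts (V / H), on group K0 | ('J %% H)%gact})
  (hiii : exists Leps : forall phi : 'CF(sdpair1 <[nVK0]>%gact @* K0),
                          'CF(('I_[set: sdprod_by <[nVK0]>%gact][phi])%G),
     let Ieps := fun psi : 'CF(K0) =>
                   exists2 lam, lam \in KK & Irr_under K0 K lam psi in
     let Ieps' := fun phi => exists2 psi, Ieps psi & phi = sdlift <[nVK0]>%gact psi in
     [/\ ext_map [set: sdprod_by <[nVK0]>%gact]%G _ Ieps' Leps,
         conj_equivariant _ _ (sdpair2 <[nVK0]>%gact @* (V / H)) Ieps' Leps
       & forall psi, Ieps psi -> forall e, e \in E -> forall s,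
           Leps (sdlift <[nVK0]>%gact (psi ^ e)%CF)
                (sdmap (fun a => a ^ coset H e) (fun x => x ^ e) s)
           = Leps (sdlift <[nVK0]>%gact psi) s]) :
  exists L : forall chi : 'CF(K), 'CF(('I_M[chi])%G),
    ext_map M K (fun chi => chi \in KK) L /\
    conj_equivariant M K (M <*> E) (fun chi => chi \in KK) L.
Proof.
have [L0 [L0ext L0eq]] := hii2; have [Leps [Lext Leq LeqE]] := hiii.
exists (Lambda _ M K K0 V H nVK0 L0 Leps); split.
- exact: Lambda_ext.
- exact: Lambda_equiv.
Qed.
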